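(* Let $\rho$ be a rational number with $0<\rho<1$ and $\rho\neq\frac12$. Then there is no integer $n>1$ such that $$n\tan(\pi\rho)=\tan(n\pi\rho).$$ *)

From Stdlib Require Export Reals ZArith.

(* Put x = pi rho and z = exp(2 i x).  As rho is rational, z is a root of unity,
   of order m > 2 because sin 2x <> 0.  Clearing denominators, n tan x = tan (n x)
   becomes (n - 1)(z^(n+1) - 1) = (n + 1)(z^n - z), which after division by
   gcd(n - 1, n + 1) reads M (z^(n+1) - 1) = N (z^n - z) with M, N coprime and
   N > 2, except for n = 3 where it forces z = +-1.  The m-th cyclotomic polynomial
   being irreducible over Q, the relation then holds at every primitive m-th root
   of unity zeta.  So alpha = (zeta^(n+1) - 1) / N is an algebraic integer (since
   M alpha and N alpha are) whose conjugates all have modulus at most 2 / N < 1;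
   its norm is a rational integer of modulus < 1, hence alpha = 0, and then
   zeta^2 = 1, a contradiction. *)

From Stdlib Require Import Lra Lia.
Set Implicit Arguments. Unset Strict Implicit. Unset Printing Implicit Defensive.
Open Scope R_scope.

Lemma cos_neq0_0PI (x : R) : 0 < x < PI -> x <> PI / 2 -> cos x <> 0.
Proof.
intros [Hx0 HxPI] Hhalf.
destruct (Rtotal_order x (PI / 2)) as [Hlt | [Heq | Hgt]].
- apply Rgt_not_eq, cos_gt_0; lra.
- contradiction.
- apply Rlt_not_eq, cos_lt_0; lra.
Qed.

Lemma sin_2a_neq0_0PI (x : R) : 0 < x < PI -> x <> PI / 2 -> sin (2 * x) <> 0.
Proof.
intros Hx Hhalf; rewrite sin_2a.
assert (Hsin : 0 < sin x) by (apply sin_gt_0; apply Hx).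
pose proof (cos_neq0_0PI Hx Hhalf) as Hcos.
intros H0; apply Rmult_integral in H0 as [H0 | H0]; [lra | contradiction].
Qed.

Lemma PI_mul_range (r : R) : 0 < r < 1 -> r <> 1 / 2 ->
  0 < PI * r < PI /\ PI * r <> PI / 2.
Proof.
intros Hr Hhalf; pose proof PI_RGT_0 as HPI.
split; [split; nra |].
intros H; apply Hhalf, (Rmult_eq_reg_l PI); lra.
Qed.

Lemma IZR_div_pos_num_ge0 (p q : Z) :
  (0 < q)%Z -> 0 < IZR p / IZR q -> (0 <= p)%Z.
Proof.
intros Hq Hpq; apply le_IZR.
assert (HqR : 0 < IZR q) by (apply IZR_lt; exact Hq).
replace (IZR p) with (IZR p / IZR q * IZR q) by (field; lra).
nra.
Qed.

Lemma cos_sin_2PI_rat_mul (p q : Z) : (0 <= p)%Z -> (0 < q)%Z ->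
  cos (INR (Z.to_nat q) * (2 * (PI * (IZR p / IZR q)))) = 1 /\
  sin (INR (Z.to_nat q) * (2 * (PI * (IZR p / IZR q)))) = 0.
Proof.
intros Hp Hq.
assert (HqR : 0 < IZR q) by (apply IZR_lt; exact Hq).
replace (INR (Z.to_nat q) * (2 * (PI * (IZR p / IZR q))))
  with (0 + 2 * INR (Z.to_nat p) * PI).
- rewrite cos_period, sin_period; split; [apply cos_0 | apply sin_0].
- rewrite !INR_IZR_INZ, !Z2Nat.id by lia; field; lra.
Qed.

Lemma tan_scale_sin_relation (c x : R) :
  cos x <> 0 -> cos (c * x) <> 0 -> c * tan x = tan (c * x) ->
  (c - 1) * sin ((c + 1) * x) = (c + 1) * sin ((c - 1) * x).
Proof.
intros Hcx Hccx Htan.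
assert (Hcross : c * sin x * cos (c * x) = sin (c * x) * cos x).
{ unfold tan in Htan.
  transitivity (c * (sin x / cos x) * cos x * cos (c * x)); [field; assumption |].
  rewrite Htan; field; assumption. }
replace ((c + 1) * x) with (c * x + x) by ring.
replace ((c - 1) * x) with (c * x - x) by ring.
rewrite sin_plus, sin_minus; lra.
Qed.

From HB Require Import structures.
From mathcomp Require Import all_boot all_order all_algebra all_fingroup all_field.
From mathcomp Require Import integral_char Rstruct complex ring zify.
Import Order.TTheory GRing.Theory Num.Theory.
Local Open Scope ring_scope.

Lemma prim_order_gt2 (R : idomainType) (z : R) m :
  m.-primitive_root z -> (2 < m)%N = (z ^+ 2 != 1).
Proof.
move=> prim_z; rewrite -(prim_order_dvd prim_z); have m_gt0 := prim_order_gt0 prim_z.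
case: ltnP => [m_gt2 | m_le2]; first by rewrite gtnNdvd.
by case: m m_gt0 m_le2 {prim_z} => [|[|[|]]].
Qed.

Lemma norm_prim_root (R : numDomainType) (z : R) m :
  m.-primitive_root z -> `|z| = 1.
Proof.
move=> prim_z; apply/eqP; rewrite -(pexpr_eq1 (prim_order_gt0 prim_z)) //.
by rewrite -normrX (prim_expr_order prim_z) normr1.
Qed.

Lemma map_poly_ratr_intr (F : numFieldType) (p : {poly int}) :
  map_poly ratr (map_poly intr p) = map_poly intr p :> {poly F}.
Proof. by rewrite -map_poly_comp; apply: eq_map_poly => a /=; rewrite rmorph_int. Qed.

Lemma root_Cyclotomic_prim (F : fieldType) (z : F) m :
  m.-primitive_root z -> root (map_poly intr 'Phi_m) z.
Proof.
move=> prim_z; have m_gt0 := prim_order_gt0 prim_z.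
have map_prod_Cyclotomic d : (0 < d)%N ->
    \prod_(e <- divisors d) map_poly intr 'Phi_e = 'X^d - 1 :> {poly F}.
  move=> d_gt0; have /(congr1 (map_poly (intr : int -> F))) := prod_Cyclotomic d_gt0.
  by rewrite rmorph_prod rmorphB rmorph1 /= map_polyXn.
have : root (\prod_(d <- divisors m) map_poly intr 'Phi_d) z.
  by rewrite map_prod_Cyclotomic // /root !hornerE (prim_expr_order prim_z) subrr.
rewrite /root horner_prod prodf_seq_eq0 => /hasP[d].
rewrite -dvdn_divisors // => dv_dm /= Phi_d_z.
have [<- // | ne_dm] := eqVneq d m.
have d_gt0 : (0 < d)%N by apply: dvdn_gt0 dv_dm.
have zd1 : z ^+ d = 1.
  have : root ('X^d - 1) z.
    rewrite -map_prod_Cyclotomic // /root horner_prod prodf_seq_eq0.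
    by apply/hasP; exists d; rewrite // -dvdn_divisors.
  by rewrite /root !hornerE subr_eq0 => /eqP.
by move: ne_dm; rewrite eqn_dvd dv_dm (prim_order_dvd prim_z) zd1 eqxx.
Qed.

Lemma root_prim_rat_poly (zeta : algC) m (q : {poly rat}) :
  m.-primitive_root zeta -> root (map_poly ratr q) zeta = (map_poly intr 'Phi_m %| q).
Proof.
move=> prim_zeta; have [p [Dp _] ->] := minCpolyP zeta.
congr (_ %| q); apply: (map_inj_poly (fmorph_inj (@ratr algC)) (rmorph0 _)).
rewrite -Dp map_poly_ratr_intr (minCpoly_cyclotomic prim_zeta).
by rewrite (Cintr_Cyclotomic prim_zeta).
Qed.

Lemma prim_root_rat_poly_transfer (F : numFieldType) (z : F) (zeta : algC) m
    (q : {poly rat}) :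
  m.-primitive_root z -> m.-primitive_root zeta ->
  root (map_poly ratr q) z -> root (map_poly ratr q) zeta.
Proof.
move=> prim_z prim_zeta qz; pose PhiQ : {poly rat} := map_poly intr 'Phi_m.
have PhiQ_C : map_poly ratr PhiQ = cyclotomic zeta m.
  by rewrite map_poly_ratr_intr (Cintr_Cyclotomic prim_zeta).
have ncop : ~~ coprimep PhiQ q.
  rewrite -(coprimep_map (@ratr F)) map_poly_ratr_intr.
  apply/negP => /coprimep_root/(_ (root_Cyclotomic_prim prim_z)).
  by rewrite (rootP qz) eqxx.
have [w] : exists w : algC, root (map_poly ratr (gcdp PhiQ q)) w.
  by apply/closed_rootP; rewrite size_map_poly.
rewrite gcdp_map root_gcd PhiQ_C root_cyclotomic // => /andP[prim_w qw].
by rewrite (root_prim_rat_poly _ prim_zeta) -(root_prim_rat_poly _ prim_w).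
Qed.

Lemma Aint_coprime_natr (alpha : algC) (M N : nat) : coprime M N ->
  alpha * M%:R \in Aint -> alpha * N%:R \in Aint -> alpha \in Aint.
Proof.
move=> coMN AintM AintN; have [u [v Duv]] := Bezoutz M N.
have : (u * M + v * N)%:~R = 1 :> algC by rewrite Duv /gcdz /= (eqnP coMN).
rewrite rmorphD !rmorphM /= => uv1.
have -> : alpha = alpha * M%:R * u%:~R + alpha * N%:R * v%:~R.
  by rewrite -[in LHS](mulr1 alpha) -{1}uv1; ring.
by rewrite rpredD // rpredM // Aint_int.
Qed.

Lemma Aint_aut_norm_lt1 (Qn : splittingFieldType rat) (QnC : {rmorphism Qn -> algC})
    (a : Qn) :
    galois 1 {:Qn} -> QnC a \in Aint ->
  (forall nu : {rmorphism algC -> algC}, `|nu (QnC a)| < 1) -> a = 0.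
Proof.
move=> galQn Za small; have [// | nz_a] := eqVneq a 0.
pose nu (g : gal_of {:Qn}) := sval (extend_algC_subfield_aut QnC g).
have nuE (g : gal_of {:Qn}) : QnC (g a) = nu g (QnC a).
  by rewrite /nu; case: (extend_algC_subfield_aut QnC g) => f /= ->.
pose beta := QnC (galNorm 1 {:Qn} a).
have Dbeta : beta = \prod_(g in 'Gal({:Qn} / 1)%g) nu g (QnC a).
  by rewrite /beta rmorph_prod; apply: eq_bigr => g _; apply: nuE.
have Zbeta : beta \in Num.int.
  apply: Cint_rat_Aint; last by rewrite Dbeta rpred_prod // => g _; rewrite Aint_aut.
  rewrite /beta; have /vlineP[c ->] := mem_galNorm galQn (memvf a).
  by rewrite alg_num_field fmorph_rat Crat_rat.
have beta_ge1 : 1 <= `|beta| by rewrite norm_intr_ge1 // fmorph_eq0 galNorm_eq0.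
have beta_lt1 : `|beta| < 1.
  rewrite Dbeta normr_prod (bigD1 1%g) ?group1 //=.
  apply: le_lt_trans (small (nu 1%g)).
  by apply: ler_piMr; rewrite // prodr_ile1 // => g _; rewrite normr_ge0 ltW.
by move: (le_lt_trans beta_ge1 beta_lt1); rewrite ltxx.
Qed.

Definition tan_poly (R : nzRingType) (M N n : nat) : {poly R} :=
  M%:R * ('X^(n.+1) - 1) - N%:R * ('X^n - 'X).

Lemma root_tan_poly (R : comNzRingType) M N n (z : R) :
  root (tan_poly R M N n) z = (M%:R * (z ^+ n.+1 - 1) == N%:R * (z ^+ n - z)).
Proof. by rewrite /root /tan_poly -!polyC_natr !hornerE subr_eq0. Qed.

Lemma map_tan_poly (R S : nzRingType) (f : {rmorphism R -> S}) M N n :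
  map_poly f (tan_poly R M N n) = tan_poly S M N n.
Proof.
rewrite /tan_poly rmorphB !rmorphM !rmorphB /= !map_polyXn map_polyX.
by rewrite rmorph1 !rmorph_nat.
Qed.

Lemma tan_relation_expS_neq1 (R : idomainType) (z : R) m M N n :
    (2 < m)%N -> m.-primitive_root z -> N%:R != 0 :> R ->
  M%:R * (z ^+ n.+1 - 1) = N%:R * (z ^+ n - z) -> z ^+ n.+1 != 1.
Proof.
move=> m_gt2 prim_z nzN rel; move: m_gt2; rewrite (prim_order_gt2 prim_z).
apply: contra => /eqP zn1.
move: rel; rewrite zn1 subrr mulr0 => /esym/eqP; rewrite mulf_eq0 (negbTE nzN) subr_eq0.
by move/eqP=> zn; apply/eqP; rewrite -zn1 [RHS]exprSr zn expr2.
Qed.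

Lemma prim_root_tan_relation_algC m M N n :
    (2 < m)%N -> (2 < N)%N -> coprime M N ->
  exists2 zeta : algC, m.-primitive_root zeta &
    M%:R * (zeta ^+ n.+1 - 1) != N%:R * (zeta ^+ n - zeta).
Proof.
move=> m_gt2 N_gt2 coMN; have m_gt0 : (0 < m)%N by apply: ltn_trans m_gt2.
(* A Galois number field containing a primitive m-th root of unity. *)
have [Qn galQn [QnC _ [w [prim_w _] _]]] := group_num_field_exists (Zp_group m).
rewrite card_Zp // in prim_w.
have prim_zeta : m.-primitive_root (QnC w) by rewrite fmorph_primitive_root.
exists (QnC w) => //; apply/eqP => rel.
have nzN : N%:R != 0 :> algC by rewrite pnatr_eq0 gtn_eqF // ltnW // ltnW.
set zeta := QnC w in prim_zeta rel *.
pose alpha := (zeta ^+ n.+1 - 1) / N%:R.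
have [a Da] : exists a, QnC a = alpha.
  exists ((w ^+ n.+1 - 1) / N%:R).
  by rewrite fmorph_div rmorphB rmorphXn rmorph1 rmorph_nat.
have Zalpha : alpha \in Aint.
  have Zzeta := Aint_prim_root prim_zeta.
  apply: (Aint_coprime_natr coMN).
    rewrite /alpha mulrAC [_ * M%:R]mulrC rel [N%:R * _]mulrC mulfK //.
    by rewrite rpredB ?rpredX.
  by rewrite /alpha divfK // rpredB ?rpredX ?Aint1.
have small_alpha (nu : {rmorphism algC -> algC}) : `|nu alpha| < 1.
  rewrite /alpha fmorph_div rmorphB rmorphXn rmorph1 rmorph_nat normf_div normr_nat.
  rewrite ltr_pdivrMr ?ltr0n ?(ltn_trans _ N_gt2) // mul1r.
  apply: le_lt_trans (ler_normB _ _) _.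
  have prim_nu_zeta : m.-primitive_root (nu zeta) by rewrite fmorph_primitive_root.
  rewrite normrX (norm_prim_root prim_nu_zeta) expr1n normr1.
  by rewrite -[1 + 1]/(2%:R) ltr_nat.
have a0 : a = 0 by apply: (Aint_aut_norm_lt1 (QnC := QnC) galQn) => [|nu]; rewrite Da.
have /eqP := tan_relation_expS_neq1 m_gt2 prim_zeta nzN rel; apply.
move: Da; rewrite a0 rmorph0 /alpha => /esym/eqP.
by rewrite mulf_eq0 invr_eq0 (negbTE nzN) orbF subr_eq0 => /eqP.
Qed.

Lemma prim_root_tan_relation_coprime (F : numFieldType) (z : F) m M N n :
    (2 < m)%N -> (2 < N)%N -> coprime M N -> m.-primitive_root z ->
  M%:R * (z ^+ n.+1 - 1) != N%:R * (z ^+ n - z).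
Proof.
move=> m_gt2 N_gt2 coMN prim_z.
have [zeta prim_zeta] := prim_root_tan_relation_algC n m_gt2 N_gt2 coMN.
apply: contra => rel_z.
have := prim_root_rat_poly_transfer (q := tan_poly rat M N n) prim_z prim_zeta.
by rewrite !map_tan_poly !root_tan_poly; apply.
Qed.

Lemma tan_coeff_coprime n : (1 < n)%N -> n != 3 ->
  exists M N, [/\ coprime M N, (2 < N)%N & (n.-1 * N = n.+1 * M)%N].
Proof.
move=> n_gt1 n_neq3; have [n_odd | n_even] := boolP (odd n).
  have Dn : n = (n./2).*2.+1 by rewrite -[n in LHS]odd_double_half n_odd.
  set k := n./2 in Dn *; exists k, k.+1; split; first exact: coprimenS.
    by move: n_gt1 n_neq3; rewrite Dn -muln2; lia.
  by rewrite Dn -muln2; lia.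
exists n.-1, n.+1; split => //; last exact: mulnC.
have -> : n.+1 = (n.-1 + 2)%N by lia.
rewrite /coprime gcdnDl -/(coprime _ _) coprimen2.
by clear n_neq3; case: n n_gt1 n_even => // n _ /=; rewrite negbK.
Qed.

Lemma prim_root_tan_relation (F : numFieldType) (z : F) m n :
    (2 < m)%N -> (1 < n)%N -> m.-primitive_root z ->
  n.-1%:R * (z ^+ n.+1 - 1) != n.+1%:R * (z ^+ n - z).
Proof.
move=> m_gt2 n_gt1 prim_z; have [-> | n_neq3] := eqVneq n 3.
  move: m_gt2; rewrite (prim_order_gt2 prim_z); apply: contra => /eqP rel.
  have : (z - 1) ^+ 3 * (z + 1) * 2%:R = 0.
    transitivity (2%:R * (z ^+ 4 - 1) - 4%:R * (z ^+ 3 - z)); first by ring.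
    by rewrite rel subrr.
  move/eqP; rewrite !mulf_eq0 pnatr_eq0 orbF !orbb subr_eq0 addr_eq0.
  by case/orP => /eqP ->; rewrite ?sqrrN expr1n.
have [M [N [coMN N_gt2 DMN]]] := tan_coeff_coprime n_gt1 n_neq3.
apply: contra (prim_root_tan_relation_coprime n m_gt2 N_gt2 coMN prim_z) => /eqP rel.
have nz_nS : n.+1%:R != 0 :> F by rewrite pnatr_eq0.
apply/eqP/(mulfI nz_nS).
by rewrite mulrA -natrM -DMN natrM [_ * N%:R]mulrC -mulrA rel mulrCA.
Qed.

Local Open Scope complex_scope.

Definition expi (t : R) : R[i] := Complex (cos t) (sin t).

Lemma expi0 : expi 0 = 1.
Proof. by rewrite /expi cos_0 sin_0. Qed.

Lemma expiD (a b : R) : expi a * expi b = expi (a + b).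
Proof.
rewrite /expi /GRing.mul /=; congr Complex.
  by rewrite cos_plus.
by rewrite sin_plus /GRing.add /= Rplus_comm.
Qed.

Lemma expiX (t : R) (k : nat) : expi t ^+ k = expi (INR k * t).
Proof.
elim: k => [|k IH]; first by rewrite expr0 /expi Rmult_0_l cos_0 sin_0.
by rewrite exprSr IH expiD S_INR Rmult_plus_distr_r Rmult_1_l.
Qed.

Lemma expi_addsub (u v : R) :
  expi (u + v) - expi (u - v) = expi u * (2 * sin v)*i.
Proof.
rewrite /expi cos_plus cos_minus sin_plus sin_minus.
rewrite /GRing.mul /GRing.add /GRing.opp /=.
by congr Complex; rewrite ?RealsE; ring.
Qed.

Lemma natr_mul_imag (k : nat) (a : R) : k%:R * a*i = (k%:R * a)*i.
Proof.
rewrite -(rmorph_nat (real_complex R)) /GRing.mul /=.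
by rewrite !mul0r !mulr0 subr0 addr0.
Qed.

Lemma expi_tan_relation (n : nat) (x : R) : (0 < n)%N ->
  (INR n - 1) * sin ((INR n + 1) * x) = (INR n + 1) * sin ((INR n - 1) * x) ->
  n.-1%:R * (expi (2 * x) ^+ n.+1 - 1) = n.+1%:R * (expi (2 * x) ^+ n - expi (2 * x)).
Proof.
case: n => // n _.
have -> : expi (2 * x) ^+ n.+2 - 1 =
    expi (INR n.+2 * x) * (2 * sin (INR n.+2 * x))*i.
  rewrite -expi_addsub expiX -expi0.
  by congr (expi _ - expi _); rewrite ?S_INR; lra.
have -> : expi (2 * x) ^+ n.+1 - expi (2 * x) =
    expi (INR n.+2 * x) * (2 * sin (INR n * x))*i.
  rewrite -expi_addsub expiX.
  by congr (expi _ - expi _); rewrite ?S_INR; lra.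
move=> rel; rewrite [LHS]mulrCA [RHS]mulrCA !natr_mul_imag; congr (_ * _*i).
move: rel; rewrite !RealsE natr1 -[n.+1%:R]natr1 addrK /= => rel.
by rewrite mulrCA rel mulrCA.
Qed.

Lemma expi_sqr_neq1 (t : R) : sin t <> 0 -> expi t ^+ 2 != 1.
Proof.
move=> sin_t; rewrite -subr_eq0 subr_sqr_1 mulf_eq0 subr_eq0 addr_eq0.
by apply/negP => /orP[] /eqP/(congr1 (@complex.Im R)) /=; rewrite ?oppr0.
Qed.

Lemma expi_2PI_rat_prim_root (p q : Z) : Z.le 0 p -> Z.lt 0 q ->
  exists m, m.-primitive_root (expi (2 * (PI * (IZR p / IZR q)))).
Proof.
move=> p_ge0 q_gt0; have q_nat_gt0 : (0 < Z.to_nat q)%N by lia.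
suff /(prim_order_exists q_nat_gt0)[m prim_z _] :
  expi (2 * (PI * (IZR p / IZR q))) ^+ Z.to_nat q = 1 by exists m.
have [cos1 sin0] := cos_sin_2PI_rat_mul p_ge0 q_gt0.
by rewrite expiX /expi cos1 sin0.
Qed.

Close Scope complex_scope.
Close Scope ring_scope.

Theorem theorem1 (p q : Z) (hq : Z.lt 0 q)
  (h0 : 0 < IZR p / IZR q) (h1 : IZR p / IZR q < 1)
  (hhalf : IZR p / IZR q <> 1/2) :
  ~ exists n : nat, (1 < n)%coq_nat /\
      cos (INR n * PI * (IZR p / IZR q)) <> 0 /\
      INR n * tan (PI * (IZR p / IZR q)) = tan (INR n * PI * (IZR p / IZR q)).
Proof.
move=> [n [/ssrnat.ltP n_gt1 [cos_nx tan_eq]]].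
rewrite Rmult_assoc in cos_nx tan_eq.
have [x_range x_half] := PI_mul_range (conj h0 h1) hhalf.
have rel := tan_scale_sin_relation (cos_neq0_0PI x_range x_half) cos_nx tan_eq.
have [m prim_z] := expi_2PI_rat_prim_root (IZR_div_pos_num_ge0 hq h0) hq.
have m_gt2 : (2 < m)%N.
  by rewrite (prim_order_gt2 prim_z); apply: expi_sqr_neq1; apply: sin_2a_neq0_0PI.
have := prim_root_tan_relation m_gt2 n_gt1 prim_z.
by rewrite (expi_tan_relation (ltnW n_gt1) rel) eqxx.
Qed.
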